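(* Assume $\hat{\Omega}_{1:r} = \Omega_{1:r}$. Then $\Sigma$ and $\hat{\Sigma}$ satisfy: (T1) (MSS) For any $\rho \geq \rho(\boldsymbol{\mathcal{A}})$ and its corresponding $\tau$, any $\hat{\rho} \geq \rho(\hat{\boldsymbol{\mathcal{A}}})$ and its corresponding $\bar{\tau}$, \[ \rho(\hat{\boldsymbol{\mathcal{A}}}) - \rho(\boldsymbol{\mathcal{A}}) \leq \tau \epsilon_\rho + (\rho - \rho(\boldsymbol{\mathcal{A}})),\qquad \rho(\boldsymbol{\mathcal{A}}) - \rho(\hat{\boldsymbol{\mathcal{A}}}) \leq \bar{\tau} \epsilon_\rho + (\hat{\rho} - \rho(\hat{\boldsymbol{\mathcal{A}}})),\] where $\epsilon_\rho:= \sqrt{s} ((2 \bar{A} + \epsilon_{\mathbf{A}}) \epsilon_{\mathbf{A}} + \bar{A}^2 \epsilon_{\mathbf{T}})$. (T2) (Uniform stability) For any $\xi \geq \xi(\mathbf{A}_{1:s})$ and its corresponding $\kappa$, any $\hat{\xi} \geq \xi(\hat{\mathbf{A}}_{1:r})$ and its corresponding $\bar{\kappa}$, \[ \xi(\hat{\mathbf{A}}_{1:r}) - \xi(\mathbf{A}_{1:s}) \leq \kappa \epsilon_{\mathbf{A}} + (\xi - \xi(\mathbf{A}_{1:s})),\qquad \xi(\mathbf{A}_{1:s}) - \xi(\hat{\mathbf{A}}_{1:r}) \leq \bar{\kappa} \epsilon_{\mathbf{A}} + (\hat{\xi} - \xi(\hat{\mathbf{A}}_{1:r})).\]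
   Context: $\Sigma$ is an MJS $\mathbf{x}_{t+1}=\mathbf{A}_{\omega_t}\mathbf{x}_t+\mathbf{B}_{\omega_t}\mathbf{u}_t$ with $s$ modes and ergodic Markov matrix $\mathbf{T}$; given a partition $\Omega_{1:r}$ of $[s]$, $\sum_k\sum_{i,i'\in\Omega_k}\|\mathbf{A}_i-\mathbf{A}_{i'}\|_F\le\epsilon_{\mathbf{A}}$, similarly for $\mathbf{B}$ with $\epsilon_{\mathbf{B}}$, and $\mathbf{T}$ is $\epsilon_{\mathbf{T}}$-approximately lumpable ($\sum_{k,l}\sum_{i,i'\in\Omega_k}|\sum_{j\in\Omega_l}\mathbf{T}(i,j)-\sum_{j\in\Omega_l}\mathbf{T}(i',j)|\le\epsilon_{\mathbf{T}}$) or aggregatable ($\sum_k\sum_{i,i'\in\Omega_k}\|\mathbf{T}(i,:)-\mathbf{T}(i',:)\|_1\le\epsilon_{\mathbf{T}}$). Given estimated partition $\hat{\Omega}_{1:r}$, the reduced MJS $\hat{\Sigma}$ has $\hat{\mathbf{A}}_k$, $\hat{\mathbf{B}}_k$ the averages of $\mathbf{A}_i$, $\mathbf{B}_i$ over $i\in\hat{\Omega}_k$ and $\hat{\mathbf{T}}(k,l)=\frac{1}{|\hat{\Omega}_k|}\sum_{i\in\hat{\Omega}_k,j\in\hat{\Omega}_l}\mathbf{T}(i,j)$. The expanded MJS has $s$ modes with $\bar{\mathbf{A}}_i=\hat{\mathbf{A}}_k$ for $i\in\hat{\Omega}_k$ and Markov matrix $\bar{\mathbf{T}}$ with $\|\bar{\mathbf{T}}-\mathbf{T}\|_\infty\le\epsilon_{\mathbf{T}}$,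 $\|\bar{\mathbf{T}}-\mathbf{T}\|_F\le\epsilon_{\mathbf{T}}$, and $\sum_{j\in\hat{\Omega}_l}\bar{\mathbf{T}}(i,j)=\hat{\mathbf{T}}(k,l)$ for $i\in\hat{\Omega}_k$. Augmented matrices: $\boldsymbol{\mathcal{A}}$ ($sn^2\times sn^2$) with $ij$-th block $\mathbf{T}(j,i)\mathbf{A}_j\otimes\mathbf{A}_j$, $\hat{\boldsymbol{\mathcal{A}}}$ ($rn^2\times rn^2$) with blocks $\hat{\mathbf{T}}(j,i)\hat{\mathbf{A}}_j\otimes\hat{\mathbf{A}}_j$, $\bar{\boldsymbol{\mathcal{A}}}$ with blocks $\bar{\mathbf{T}}(j,i)\bar{\mathbf{A}}_j\otimes\bar{\mathbf{A}}_j$; $\rho(\cdot)$ is the spectral radius, $\xi(\cdot)$ the joint spectral radius. $\tau:=\sup_{k\in\mathbb{N}}\|\boldsymbol{\mathcal{A}}^k\|/\rho^k$, $\bar{\tau}:=\sup_k\|\bar{\boldsymbol{\mathcal{A}}}^k\|/\hat{\rho}^k$, $\kappa:=\sup_k\max_{\omega_{1:k}\in[s]^k}\|\mathbf{A}_{\omega_1}\cdots\mathbf{A}_{\omega_k}\|/\xi^k$, $\bar{\kappa}:=\sup_k\max_{\omega_{1:k}}\|\bar{\mathbf{A}}_{\omega_1}\cdots\bar{\mathbf{A}}_{\omega_k}\|/\hat{\xi}^k$. The scalar $\bar{A}:=\max_i\|\mathbf{A}_i\|$. *)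

From HB Require Import structures.
From mathcomp Require Import all_boot all_order all_algebra.
From mathcomp Require Import all_classical all_reals.
From mathcomp Require Import topology normedtype sequences exp.
From mathcomp Require Import complex mxtens.

Set Implicit Arguments.
Unset Strict Implicit.
Unset Printing Implicit Defensive.

Import Order.TTheory GRing.Theory Num.Theory.
Import numFieldNormedType.Exports.
Local Open Scope classical_set_scope.
Local Open Scope ring_scope.

Section MJSDefs.
Variable R : realType.

Definition frobn {m n} (M : 'M[R]_(m, n)) : R :=
  Num.sqrt (\sum_(i < m) \sum_(j < n) M i j ^+ 2).

Definition vnorm2 {n} (x : 'cV[R]_n) : R :=
  Num.sqrt (\sum_(i < n) x i 0 ^+ 2).

Definition opnorm {m n} (M : 'M[R]_(m, n)) : R :=
  sup [set vnorm2 (M *m x) | x in [set x : 'cV[R]_n | vnorm2 x = 1]].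

Definition infnorm {m n} (M : 'M[R]_(m, n)) : R :=
  \big[Num.max/0]_(i < m) \sum_(j < n) `|M i j|.

Definition specrad {m} (M : 'M[R]_m) : R :=
  sup [set Normc.normc l | l in
        [set l : R[i] | root (char_poly (map_mx (fun x : R => (x%:C)%C) M)) l]].

Definition prodmx {I : finType} {n k} (A : I -> 'M[R]_n) (w : {ffun 'I_k -> I})
  : 'M[R]_n := \big[mulmx/1%:M]_(j < k) A (w j).

Definition jsr {I : finType} {n} (A : I -> 'M[R]_n) : R :=
  limn (fun k : nat =>
     powR (\big[Num.max/0]_(w : {ffun 'I_k -> I}) opnorm (prodmx A w)) (k%:R^-1)).

Definition markov {s} (T : 'M[R]_s) : Prop :=
  (forall i j, 0 <= T i j) /\ (forall i, \sum_(j < s) T i j = 1).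

(* ergodic finite Markov chain (irreducible and aperiodic, i.e. primitive) *)
Definition ergodic {s} (T : 'M[R]_s) : Prop :=
  markov T /\ exists k : nat, forall i j, 0 < (T ^+ k) i j.

(* partition Omega_{1:r} of [s] encoded by the label map lab : Omega_k = lab^-1(k);
   every block is nonempty *)
Definition is_partition {s r} (lab : 'I_s -> 'I_r) : Prop :=
  forall k : 'I_r, exists i, lab i = k.

Definition clust_close {s r m p} (lab : 'I_s -> 'I_r) (A : 'I_s -> 'M[R]_(m, p))
  (eps : R) : Prop :=
  \sum_(k < r) \sum_(i < s | lab i == k) \sum_(i' < s | lab i' == k)
     frobn (A i - A i') <= eps.

Definition approx_lumpable {s r} (lab : 'I_s -> 'I_r) (T : 'M[R]_s) (eps : R) : Prop :=
  \sum_(k < r) \sum_(l < r) \sum_(i < s | lab i == k) \sum_(i' < s | lab i' == k)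
     `| \sum_(j < s | lab j == l) T i j - \sum_(j < s | lab j == l) T i' j | <= eps.

Definition approx_aggregatable {s r} (lab : 'I_s -> 'I_r) (T : 'M[R]_s) (eps : R) : Prop :=
  \sum_(k < r) \sum_(i < s | lab i == k) \sum_(i' < s | lab i' == k)
     \sum_(j < s) `| T i j - T i' j | <= eps.

Definition csize {s r} (lab : 'I_s -> 'I_r) (k : 'I_r) : R :=
  #|[set i | lab i == k]|%:R.

Definition red_mats {s r m p} (lab : 'I_s -> 'I_r) (A : 'I_s -> 'M[R]_(m, p))
  (k : 'I_r) : 'M[R]_(m, p) :=
  (csize lab k)^-1 *: \sum_(i < s | lab i == k) A i.

Definition red_markov {s r} (lab : 'I_s -> 'I_r) (T : 'M[R]_s) : 'M[R]_r :=
  \matrix_(k, l) ((csize lab k)^-1 *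
      \sum_(i < s | lab i == k) \sum_(j < s | lab j == l) T i j).

Definition exp_mats {s r m p} (lab : 'I_s -> 'I_r) (A : 'I_s -> 'M[R]_(m, p))
  (i : 'I_s) : 'M[R]_(m, p) := red_mats lab A (lab i).

Definition aug {s n} (T : 'M[R]_s) (A : 'I_s -> 'M[R]_n)
  : 'M[R]_(\sum_(i < s) (n * n)) :=
  \mxblock_(i < s, j < s) (T j i *: (A j *t A j)).

Definition Abar_max {s n} (A : 'I_s -> 'M[R]_n) : R :=
  \big[Num.max/0]_(i < s) opnorm (A i).

Definition eps_rho {s n} (A : 'I_s -> 'M[R]_n) (epsA epsT : R) : R :=
  Num.sqrt s%:R * ((2 * Abar_max A + epsA) * epsA + Abar_max A ^+ 2 * epsT).

End MJSDefs.

From HB Require Import structures.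
From mathcomp Require Import all_boot all_order all_algebra.
From mathcomp Require Import all_classical all_reals.
From mathcomp Require Import topology normedtype sequences exp.
From mathcomp Require Import complex mxtens.
From mathcomp Require Import ring lra zify.
Import Order.TTheory GRing.Theory Num.Theory.
Import numFieldNormedType.Exports.
Local Open Scope ring_scope.

Set Implicit Arguments.
Unset Strict Implicit.
Unset Printing Implicit Defensive.

(* Everything is compared on the expanded system, which has the s modes of the
   original one: its modes Abar are mode-wise epsA-close to A, and when T is
   approximately lumpable an explicit Markov matrix Tbar with the block sums of
   That is epsT-close to T in Frobenius norm, so that the augmented matrices are
   eps_rho-close in operator norm. A power bound ||M^k|| <= tau rho^k survives a
   perturbation of size e as ||(M + D)^k|| <= tau (rho + tau e)^k (telescoping),
   and such bounds control the spectral radius; the same estimate on products of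
   modes controls the joint spectral radius. The reduced and expanded systems
   are related exactly: every eigenvalue of the reduced augmented matrix is one
   of the expanded one (a left eigenvector is copied along the clusters), and
   every product of reduced modes is a product of expanded modes. *)

Section SumInequalities.
Variable R : realType.

Lemma cauchy_schwarz_sum (I : finType) (a b : I -> R) :
  (\sum_i a i * b i) ^+ 2 <= (\sum_i a i ^+ 2) * (\sum_i b i ^+ 2).
Proof.
set Sab := \sum_i a i * b i; set Saa := \sum_i a i ^+ 2; set Sbb := \sum_i b i ^+ 2.
have lagrange : \sum_i \sum_j (a i * b j - a j * b i) ^+ 2 =
    \sum_i \sum_j (a i ^+ 2 * b j ^+ 2) + \sum_i \sum_j (a j ^+ 2 * b i ^+ 2)
    - 2 * \sum_i \sum_j (a i * b i) * (a j * b j).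
  rewrite (eq_bigr (fun i => \sum_j (a i ^+ 2 * b j ^+ 2 + a j ^+ 2 * b i ^+ 2
      - 2 * ((a i * b i) * (a j * b j))))); last first.
    by move=> i _; apply: eq_bigr => j _; ring.
  rewrite mulr_sumr -big_split -sumrB /=; apply: eq_bigr => i _.
  by rewrite mulr_sumr -big_split -sumrB.
have prod_sums : \sum_i \sum_j (a i ^+ 2 * b j ^+ 2) = Saa * Sbb.
  by rewrite mulr_suml; apply: eq_bigr => i _; rewrite mulr_sumr.
have sqr_sum : \sum_i \sum_j (a i * b i) * (a j * b j) = Sab ^+ 2.
  by rewrite expr2 mulr_suml; apply: eq_bigr => i _; rewrite mulr_sumr.
have : 0 <= \sum_i \sum_j (a i * b j - a j * b i) ^+ 2.
  by apply: sumr_ge0 => i _; apply: sumr_ge0 => j _; exact: sqr_ge0.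
rewrite lagrange [X in _ + X - _]exchange_big /= prod_sums sqr_sum; lra.
Qed.

Lemma sqrtr_le (a c : R) : 0 <= c -> a <= c ^+ 2 -> Num.sqrt a <= c.
Proof. by move=> c0 ac; rewrite -[c]ger0_norm // -sqrtr_sqr ler_wsqrtr. Qed.

Lemma minkowski_sum (I : finType) (x y : I -> R) :
  Num.sqrt (\sum_i (x i + y i) ^+ 2) <=
  Num.sqrt (\sum_i x i ^+ 2) + Num.sqrt (\sum_i y i ^+ 2).
Proof.
have hx : 0 <= \sum_i x i ^+ 2 by apply: sumr_ge0 => i _; exact: sqr_ge0.
have hy : 0 <= \sum_i y i ^+ 2 by apply: sumr_ge0 => i _; exact: sqr_ge0.
set sx := Num.sqrt (\sum_i x i ^+ 2); set sy := Num.sqrt (\sum_i y i ^+ 2).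
apply: sqrtr_le; first by rewrite addr_ge0 ?sqrtr_ge0.
have -> : \sum_i (x i + y i) ^+ 2 =
    \sum_i x i ^+ 2 + \sum_i y i ^+ 2 + 2 * \sum_i x i * y i.
  rewrite mulr_sumr -!big_split /=; apply: eq_bigr => i _; ring.
rewrite sqrrD !sqr_sqrtr //.
suff : \sum_i x i * y i <= sx * sy by lra.
apply: le_trans (ler_norm _) _.
rewrite -(@ler_pXn2r _ 2) ?nnegrE ?mulr_ge0 ?sqrtr_ge0 //.
by rewrite real_normK ?num_real // exprMn !sqr_sqrtr // cauchy_schwarz_sum.
Qed.

Lemma sum_sqr_le_sqr_sum (I : finType) (a : I -> R) : (forall i, 0 <= a i) ->
  \sum_i a i ^+ 2 <= (\sum_i a i) ^+ 2.
Proof.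
move=> a0; rewrite [X in _ <= X]expr2 mulr_suml; apply: ler_sum => i _.
by rewrite expr2 ler_wpM2l // (bigD1 i) //= lerDl sumr_ge0.
Qed.

Lemma sqrt_le_mul (c a b : R) : 0 <= c -> a <= c ^+ 2 * b ->
  Num.sqrt a <= c * Num.sqrt b.
Proof.
move=> c0 h; rewrite -[c]ger0_norm // -sqrtr_sqr -sqrtrM ?sqr_ge0 //.
have [b0|b0] := leP 0 b; first by rewrite ler_sqrt // mulr_ge0 // sqr_ge0.
have hc : c ^+ 2 * b <= 0 by rewrite mulr_ge0_le0 ?sqr_ge0 // ltW.
by rewrite (ler0_sqrtr hc) (ler0_sqrtr (le_trans h hc)).
Qed.

Lemma exists_expr_gt (q K : R) : 1 < q -> exists k, K < q ^+ k.
Proof.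
move=> q1; have q0 : 0 < q - 1 by rewrite subr_gt0.
have bernoulli k : 1 + k%:R * (q - 1) <= q ^+ k.
  elim: k => [|k IH]; first by rewrite expr0 mul0r addr0.
  rewrite exprS -natr1; apply: le_trans (ler_wpM2l (ltW (lt_trans ltr01 q1)) IH).
  have -> : q * (1 + k%:R * (q - 1)) =
      1 + (k%:R + 1) * (q - 1) + k%:R * (q - 1) ^+ 2 by ring.
  by rewrite lerDl mulr_ge0 ?sqr_ge0.
pose k := Num.Def.archi_bound (`|K| / (q - 1)).
have := @archi_boundP _ (`|K| / (q - 1)) (divr_ge0 (normr_ge0 K) (ltW q0)).
rewrite -/k ltr_pdivrMr // => hk; exists k.
by apply: lt_le_trans (bernoulli k); have := ler_norm K; lra.
Qed.

Lemma ler_of_expr_bound (x c K : R) : 0 <= c ->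
  (forall k, x ^+ k <= K * c ^+ k) -> x <= c.
Proof.
move=> c0 bound; rewrite leNgt; apply/negP => cx.
have [c_eq0|c_gt0] := eqVneq c 0.
  by have := bound 1%N; rewrite c_eq0 expr1 mulr0 leNgt -c_eq0 cx.
have c_pos : 0 < c by rewrite lt0r c_gt0.
have [k Kk] : exists k, K < (x / c) ^+ k.
  by apply: exists_expr_gt; rewrite ltr_pdivlMr ?mul1r.
by have := bound k; rewrite -ler_pdivrMr ?exprn_gt0 // -expr_div_n leNgt Kk.
Qed.

End SumInequalities.

Section Norms.
Variable R : realType.
Local Open Scope classical_set_scope.

Definition sqnorm {n} (x : 'cV[R]_n) : R := \sum_i x i 0 ^+ 2.
Definition sqfrob {m n} (M : 'M[R]_(m, n)) : R := \sum_i \sum_j M i j ^+ 2.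

Lemma sqnorm_ge0 n (x : 'cV[R]_n) : 0 <= sqnorm x.
Proof. by apply: sumr_ge0 => i _; exact: sqr_ge0. Qed.

Lemma sqfrob_ge0 m n (M : 'M[R]_(m, n)) : 0 <= sqfrob M.
Proof. by apply: sumr_ge0 => i _; apply: sumr_ge0 => j _; exact: sqr_ge0. Qed.

Lemma vnorm2_ge0 n (x : 'cV[R]_n) : 0 <= vnorm2 x.
Proof. exact: sqrtr_ge0. Qed.

Lemma sqnormE n (x : 'cV[R]_n) : sqnorm x = vnorm2 x ^+ 2.
Proof. by rewrite sqr_sqrtr // sqnorm_ge0. Qed.

Lemma vnorm2_eq0 n (x : 'cV[R]_n) : vnorm2 x = 0 -> x = 0.
Proof.
move/eqP; rewrite sqrtr_eq0 => sx_le0; apply/matrixP => i j; rewrite ord1 mxE.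
have sx0 : sqnorm x = 0 by apply/eqP; rewrite eq_le sx_le0 sqnorm_ge0.
by apply/eqP; rewrite -sqrf_eq0; apply/eqP/(psumr_eq0P _ sx0) => // k _; exact: sqr_ge0.
Qed.

Lemma vnorm2_0 n : vnorm2 (0 : 'cV[R]_n) = 0.
Proof. by rewrite /vnorm2 big1 ?sqrtr0 // => i _; rewrite mxE expr0n. Qed.

Lemma vnorm2Z n a (x : 'cV[R]_n) : vnorm2 (a *: x) = `|a| * vnorm2 x.
Proof.
rewrite /vnorm2 (eq_bigr (fun i => a ^+ 2 * x i 0 ^+ 2)) => [|i _]; last first.
  by rewrite mxE exprMn.
by rewrite -mulr_sumr sqrtrM ?sqr_ge0 // sqrtr_sqr.
Qed.

Lemma vnorm2D n (x y : 'cV[R]_n) : vnorm2 (x + y) <= vnorm2 x + vnorm2 y.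
Proof.
rewrite /vnorm2 (eq_bigr (fun i => (x i 0 + y i 0) ^+ 2)) => [|i _]; last by rewrite mxE.
exact: minkowski_sum.
Qed.

Lemma vnorm2_sum n (I : finType) (F : I -> 'cV[R]_n) :
  vnorm2 (\sum_i F i) <= \sum_i vnorm2 (F i).
Proof.
elim/big_rec2: _ => [|i y M _ h]; first by rewrite vnorm2_0.
by apply: le_trans (vnorm2D _ _) _; rewrite lerD.
Qed.

Lemma sqnorm_mul_le m n (M : 'M[R]_(m, n)) x : sqnorm (M *m x) <= sqfrob M * sqnorm x.
Proof.
rewrite /sqnorm /sqfrob mulr_suml; apply: ler_sum => i _.
rewrite mxE; exact: cauchy_schwarz_sum.
Qed.

Lemma vnorm2_mul_le_frobn m n (M : 'M[R]_(m, n)) x :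
  vnorm2 (M *m x) <= frobn M * vnorm2 x.
Proof.
by rewrite -sqrtrM ?sqfrob_ge0 // ler_sqrt ?mulr_ge0 ?sqfrob_ge0 ?sqnorm_ge0 // sqnorm_mul_le.
Qed.

Lemma frobn_ge0 m n (M : 'M[R]_(m, n)) : 0 <= frobn M.
Proof. exact: sqrtr_ge0. Qed.

Lemma frobn_le_l1 m n (M : 'M[R]_(m, n)) : frobn M <= \sum_i \sum_j `|M i j|.
Proof.
apply: sqrtr_le; first by apply: sumr_ge0 => i _; apply: sumr_ge0.
rewrite !pair_bigA (eq_bigr (fun p => `|M p.1 p.2| ^+ 2)) => [|p _].
  exact: sum_sqr_le_sqr_sum.
by rewrite real_normK ?num_real.
Qed.

Lemma opnorm_nounit m n (M : 'M[R]_(m, n)) :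
  ~ (exists y : 'cV[R]_n, vnorm2 y = 1) -> opnorm M = 0.
Proof.
move=> no_unit; rewrite /opnorm (_ : [set _ | x in _] = set0) ?sup0 //.
by apply/seteqP; split => // _ [x /= x1 _]; apply: no_unit; exists x.
Qed.

Lemma vnorm2_mul_le m n (M : 'M[R]_(m, n)) x : vnorm2 (M *m x) <= opnorm M * vnorm2 x.
Proof.
have [x0|xn0] := eqVneq (vnorm2 x) 0.
  by rewrite x0 mulr0 (vnorm2_eq0 x0) mulmx0 vnorm2_0.
have xp : 0 < vnorm2 x by rewrite lt0r xn0 vnorm2_ge0.
set y := (vnorm2 x)^-1 *: x.
have y1 : vnorm2 y = 1 by rewrite vnorm2Z ger0_norm ?invr_ge0 ?vnorm2_ge0 // mulVf.
have bounded : has_sup [set vnorm2 (M *m x) | x in [set x : 'cV[R]_n | vnorm2 x = 1]].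
  split; first by exists (vnorm2 (M *m y)); exists y.
  exists (frobn M) => _ [z /= z1 <-].
  by have := vnorm2_mul_le_frobn M z; rewrite z1 mulr1.
have : vnorm2 (M *m y) <= opnorm M by apply: (sup_upper_bound bounded); exists y.
rewrite -scalemxAr vnorm2Z ger0_norm ?invr_ge0 ?vnorm2_ge0 //.
by rewrite mulrC ler_pdivrMr.
Qed.

Lemma opnorm_ge0 m n (M : 'M[R]_(m, n)) : 0 <= opnorm M.
Proof.
have [[y y1]|no_unit] := pselect (exists y : 'cV[R]_n, vnorm2 y = 1).
  by have := vnorm2_mul_le M y; rewrite y1 mulr1; apply: le_trans; exact: vnorm2_ge0.
by rewrite opnorm_nounit.
Qed.

Lemma opnorm_le m n (M : 'M[R]_(m, n)) c : 0 <= c ->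
  (forall x, vnorm2 (M *m x) <= c * vnorm2 x) -> opnorm M <= c.
Proof.
move=> c0 h.
have [[y y1]|no_unit] := pselect (exists y : 'cV[R]_n, vnorm2 y = 1).
  apply: ge_sup; first by exists (vnorm2 (M *m y)); exists y.
  by move=> _ [z /= z1 <-]; have := h z; rewrite z1 mulr1.
by rewrite opnorm_nounit.
Qed.

Lemma opnorm_le_sqnorm m n (M : 'M[R]_(m, n)) c : 0 <= c ->
  (forall x, sqnorm (M *m x) <= c ^+ 2 * sqnorm x) -> opnorm M <= c.
Proof. by move=> c0 h; apply: opnorm_le => // x; exact: (sqrt_le_mul c0 (h x)). Qed.

Lemma sqnorm_mul_le_opnorm m n (M : 'M[R]_(m, n)) x :
  sqnorm (M *m x) <= opnorm M ^+ 2 * sqnorm x.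
Proof.
rewrite !sqnormE -exprMn lerXn2r ?nnegrE ?vnorm2_mul_le ?vnorm2_ge0 //.
by rewrite mulr_ge0 ?vnorm2_ge0 ?opnorm_ge0.
Qed.

Lemma opnorm_le_frobn m n (M : 'M[R]_(m, n)) : opnorm M <= frobn M.
Proof. apply: opnorm_le; [exact: sqrtr_ge0 | exact: vnorm2_mul_le_frobn]. Qed.

Lemma opnorm_mulmx m n p (M : 'M[R]_(m, n)) (N : 'M[R]_(n, p)) :
  opnorm (M *m N) <= opnorm M * opnorm N.
Proof.
apply: opnorm_le => [|x]; first by rewrite mulr_ge0 ?opnorm_ge0.
rewrite -mulmxA; apply: le_trans (vnorm2_mul_le _ _) _.
by rewrite -mulrA ler_wpM2l ?opnorm_ge0 // vnorm2_mul_le.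
Qed.

Lemma opnormD m n (M N : 'M[R]_(m, n)) : opnorm (M + N) <= opnorm M + opnorm N.
Proof.
apply: opnorm_le => [|x]; first by rewrite addr_ge0 ?opnorm_ge0.
rewrite mulmxDl mulrDl; apply: le_trans (vnorm2D _ _) _.
by rewrite lerD // vnorm2_mul_le.
Qed.

Lemma opnormZ m n a (M : 'M[R]_(m, n)) : opnorm (a *: M) <= `|a| * opnorm M.
Proof.
apply: opnorm_le => [|x]; first by rewrite mulr_ge0 ?opnorm_ge0.
by rewrite -scalemxAl vnorm2Z -mulrA ler_wpM2l // vnorm2_mul_le.
Qed.

Lemma opnormN m n (M : 'M[R]_(m, n)) : opnorm (- M) = opnorm M.
Proof.
have le_opp (N : 'M[R]_(m, n)) : opnorm (- N) <= opnorm N.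
  by rewrite -scaleN1r; apply: le_trans (opnormZ _ _) _; rewrite normrN normr1 mul1r.
by apply/eqP; rewrite eq_le le_opp -{1}[M]opprK le_opp.
Qed.

Lemma opnorm_sum m n (I : finType) (P : pred I) (F : I -> 'M[R]_(m, n)) :
  opnorm (\sum_(i | P i) F i) <= \sum_(i | P i) opnorm (F i).
Proof.
elim/big_rec2: _ => [|i y M _ h].
  by apply: opnorm_le => // x; rewrite mul0mx mul0r vnorm2_0.
by apply: le_trans (opnormD _ _) _; rewrite lerD.
Qed.

Lemma sqfrob_col m n (W : 'M[R]_(m, n)) : sqfrob W = \sum_b sqnorm (col b W).
Proof.
rewrite /sqfrob exchange_big; apply: eq_bigr => b _; apply: eq_bigr => i _.
by rewrite !mxE.
Qed.

Lemma sqfrob_tr m n (W : 'M[R]_(m, n)) : sqfrob W^T = sqfrob W.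
Proof.
rewrite /sqfrob exchange_big; apply: eq_bigr => b _; apply: eq_bigr => i _.
by rewrite !mxE.
Qed.

Lemma sqfrob_mulmx_le m n p (X : 'M[R]_(m, n)) (W : 'M[R]_(n, p)) :
  sqfrob (X *m W) <= opnorm X ^+ 2 * sqfrob W.
Proof.
rewrite !sqfrob_col mulr_sumr; apply: ler_sum => b _.
by rewrite !colE -mulmxA sqnorm_mul_le_opnorm.
Qed.

Lemma sum_mxtens_index m n (F : 'I_(m * n) -> R) :
  \sum_k F k = \sum_i \sum_j F (mxtens_index (i, j)).
Proof.
rewrite (reindex (@mxtens_index m n)) /=; last first.
  by exists (@mxtens_unindex m n) => x _; rewrite (mxtens_indexK, mxtens_unindexK).
by rewrite pair_big /=; apply: eq_bigr => -[i j] _.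
Qed.

(* A vector z of the tensor space is a matrix Z, and (X *t Y) z is X Z Y^T. *)
Lemma opnorm_tens m1 n1 m2 n2 (X : 'M[R]_(m1, n1)) (Y : 'M[R]_(m2, n2)) :
  opnorm (X *t Y) <= opnorm X * opnorm Y.
Proof.
apply: opnorm_le_sqnorm => [|z]; first by rewrite mulr_ge0 ?opnorm_ge0.
pose Z : 'M[R]_(n1, n2) := \matrix_(j, b) z (mxtens_index (j, b)) 0.
have normZ : sqnorm z = sqfrob Z.
  rewrite /sqnorm sum_mxtens_index; apply: eq_bigr => j _; apply: eq_bigr => b _.
  by rewrite mxE.
have normXZY : sqnorm ((X *t Y) *m z) = sqfrob (X *m (Z *m Y^T)).
  rewrite /sqnorm sum_mxtens_index; apply: eq_bigr => i _; apply: eq_bigr => a _.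
  congr (_ ^+ 2); rewrite !mxE sum_mxtens_index.
  under [RHS]eq_bigr do rewrite !mxE big_distrr /=.
  apply: eq_bigr => j _; apply: eq_bigr => b _.
  by rewrite tensmxE !mxE; ring.
rewrite normZ normXZY; apply: le_trans (sqfrob_mulmx_le _ _) _.
rewrite exprMn -[_ ^+ 2 * _ ^+ 2 * _]mulrA ler_wpM2l ?sqr_ge0 //.
by rewrite -sqfrob_tr trmx_mul trmxK -[sqfrob Z]sqfrob_tr sqfrob_mulmx_le.
Qed.

Lemma sum_tagnat q (q_ : 'I_q -> nat) (F : 'I_(\sum_i q_ i) -> R) :
  \sum_k F k = \sum_i \sum_(k : 'I_(q_ i)) F (tagnat.Rank i k).
Proof.
rewrite sig_big_dep /= (reindex _ tagnat.sig_bij_on) /=.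
by apply: eq_bigr => k _; rewrite -tagnat.rankE tagnat.sigK.
Qed.

Lemma sqnorm_submxcol q (q_ : 'I_q -> nat) (x : 'cV[R]_(\sum_i q_ i)) :
  sqnorm x = \sum_i sqnorm (submxcol x i).
Proof.
rewrite /sqnorm sum_tagnat; apply: eq_bigr => i _; apply: eq_bigr => k _.
by rewrite !mxE.
Qed.

Lemma opnorm_mxblock p q (p_ : 'I_p -> nat) (q_ : 'I_q -> nat)
  (B : forall i j, 'M[R]_(p_ i, q_ j)) :
  opnorm (\mxblock_(i, j) B i j) <= Num.sqrt (\sum_i \sum_j opnorm (B i j) ^+ 2).
Proof.
have S0 : 0 <= \sum_i \sum_j opnorm (B i j) ^+ 2.
  by apply: sumr_ge0 => i _; apply: sumr_ge0 => j _; exact: sqr_ge0.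
apply: opnorm_le_sqnorm => [|x]; first exact: sqrtr_ge0.
rewrite sqr_sqrtr // -[x]submxcolK mul_mxblock_mxrow.
rewrite !sqnorm_submxcol mulr_suml; apply: ler_sum => i _; rewrite mxcolK.
have row_bound : vnorm2 (\sum_j B i j *m submxcol x j) <=
    \sum_j opnorm (B i j) * vnorm2 (submxcol x j).
  by apply: le_trans (vnorm2_sum _) _; apply: ler_sum => j _; exact: vnorm2_mul_le.
rewrite sqnormE; apply: le_trans (lerXn2r 2 _ _ row_bound) _; rewrite ?nnegrE ?vnorm2_ge0 //.
- by apply: sumr_ge0 => j _; rewrite mulr_ge0 ?opnorm_ge0 ?vnorm2_ge0.
- apply: le_trans (cauchy_schwarz_sum _ _) _; apply: ler_wpM2l.
    by apply: sumr_ge0 => j _; exact: sqr_ge0.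
  by apply: ler_sum => j _; rewrite mxcolK sqnormE.
Qed.

End Norms.

Section SpectralRadius.
Variable R : realType.
Local Open Scope classical_set_scope.
Local Notation toC := (fun x : R => (x%:C)%C).

Definition ceigenvalue {N} (M : 'M[R]_N) (l : R[i]) : bool :=
  root (char_poly (map_mx toC M)) l.

Lemma char_poly_tr (F : comNzRingType) n (A : 'M[F]_n) : char_poly A^T = char_poly A.
Proof.
rewrite /char_poly -det_tr; congr (\det _); apply/matrixP => i j.
by rewrite !mxE eq_sym.
Qed.

Lemma ceigenvalue_right N (M : 'M[R]_N) l : ceigenvalue M l ->
  exists2 x : 'cV[R[i]]_N, x != 0 & map_mx toC M *m x = l *: x.
Proof.
rewrite /ceigenvalue -char_poly_tr -eigenvalue_root_char => /eigenvalueP [v vM vn0].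
exists v^T; first by rewrite trmx_eq0.
by rewrite -[map_mx _ M]trmxK -trmx_mul vM linearZ.
Qed.

Definition sqnormc (z : R[i]) : R := complex.Re z ^+ 2 + complex.Im z ^+ 2.

Lemma sqnormcE z : sqnormc z = Normc.normc z ^+ 2.
Proof. by case: z => a b; rewrite /= sqr_sqrtr // addr_ge0 ?sqr_ge0. Qed.

Lemma normc_ge0 (z : R[i]) : 0 <= Normc.normc z.
Proof. by case: z => a b; exact: sqrtr_ge0. Qed.

Lemma normcX (z : R[i]) k : Normc.normc (z ^+ k) = Normc.normc z ^+ k.
Proof.
elim: k => [|k IH]; first by rewrite !expr0 Normc.normc1.
by rewrite !exprS Normc.normcM IH.
Qed.

(* A complex vector x = a + i b has |P x|^2 = |P a|^2 + |P b|^2 for real P. *)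
Lemma ceigenvalue_pow_le N (M : 'M[R]_N) l : ceigenvalue M l ->
  forall k, Normc.normc l ^+ k <= opnorm (M ^+ k).
Proof.
move=> /ceigenvalue_right [x xn0 Mx] k.
have Px : map_mx toC (M ^+ k) *m x = l ^+ k *: x.
  rewrite (rmorphXn (map_mx (real_complex R))) /=.
  elim: k => [|k IH]; first by rewrite !expr0 mul1mx scale1r.
  by rewrite exprSr -mulmxA Mx -scalemxAr IH scalerA exprSr mulrC.
set P := M ^+ k in Px *.
pose a : 'cV[R]_N := \col_j complex.Re (x j 0).
pose b : 'cV[R]_N := \col_j complex.Im (x j 0).
have entry (P' : 'M[R]_N) i :
    (map_mx toC P' *m x) i 0 = ((P' *m a) i 0 +i* (P' *m b) i 0)%C.
  rewrite !mxE; elim/big_rec3: _ => [//|j y1 y2 y3 _ ->]; rewrite !mxE.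
  by case: (x j 0) => u v; apply/eqP; rewrite eq_complex /= !mul0r subr0 addr0 !eqxx.
have split_sqnorm (P' : 'M[R]_N) :
    \sum_i sqnormc ((map_mx toC P' *m x) i 0) = sqnorm (P' *m a) + sqnorm (P' *m b).
  by rewrite /sqnorm -big_split; apply: eq_bigr => i _; rewrite entry.
have sqnorm_x : \sum_i sqnormc (x i 0) = sqnorm a + sqnorm b.
  by rewrite -[b]mul1mx -[a]mul1mx -split_sqnorm map_mx1 mul1mx.
have ab_pos : 0 < sqnorm a + sqnorm b.
  rewrite lt0r addr_ge0 ?sqnorm_ge0 // andbT -sqnorm_x; apply: contra xn0 => /eqP x0.
  apply/eqP/matrixP => i j; rewrite ord1 mxE; apply/Normc.eq0_normc/eqP.
  rewrite -sqrf_eq0 -sqnormcE; apply/eqP/(psumr_eq0P _ x0) => // ? _.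
  by rewrite sqnormcE sqr_ge0.
have : Normc.normc l ^+ k ^+ 2 * (sqnorm a + sqnorm b) <=
       opnorm P ^+ 2 * (sqnorm a + sqnorm b).
  have -> : Normc.normc l ^+ k ^+ 2 * (sqnorm a + sqnorm b) =
      \sum_i sqnormc ((map_mx toC P *m x) i 0).
    rewrite Px -sqnorm_x mulr_sumr; apply: eq_bigr => i _.
    by rewrite mxE !sqnormcE Normc.normcM normcX exprMn.
  by rewrite split_sqnorm mulrDr lerD ?sqnorm_mul_le_opnorm.
rewrite ler_pM2r // => sqr_le.
by rewrite -(@ler_pXn2r _ 2) ?nnegrE ?opnorm_ge0 ?exprn_ge0 ?normc_ge0.
Qed.

Lemma ceigenvalue_le_specrad N (M : 'M[R]_N) l : ceigenvalue M l ->
  Normc.normc l <= specrad M.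
Proof.
move=> Ml; apply: sup_upper_bound; last by exists l.
split; first by exists (Normc.normc l); exists l.
exists (opnorm M) => _ [z /= Mz <-].
by have := ceigenvalue_pow_le Mz 1; rewrite !expr1.
Qed.

Lemma specrad_eq0 N (M : 'M[R]_N) : ~ (exists l, ceigenvalue M l) -> specrad M = 0.
Proof.
move=> no_eig; rewrite /specrad (_ : [set _ | l in _] = set0) ?sup0 //.
by apply/seteqP; split => // _ [z /= Mz _]; apply: no_eig; exists z.
Qed.

Lemma specrad_le N (M : 'M[R]_N) c : 0 <= c ->
  (forall l, ceigenvalue M l -> Normc.normc l <= c) -> specrad M <= c.
Proof.
move=> c0 bound.
have [[l Ml]|no_eig] := pselect (exists l, ceigenvalue M l); last by rewrite specrad_eq0.
apply: ge_sup; first by exists (Normc.normc l); exists l.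
by move=> _ [z /= Mz <-]; exact: bound.
Qed.

Lemma specrad_ge0 N (M : 'M[R]_N) : 0 <= specrad M.
Proof.
have [[l Ml]|no_eig] := pselect (exists l, ceigenvalue M l); last by rewrite specrad_eq0.
exact: le_trans (normc_ge0 l) (ceigenvalue_le_specrad Ml).
Qed.

Lemma pow_bound_ge0 N (M : 'M[R]_N) K c :
  (forall k, opnorm (M ^+ k) <= K * c ^+ k) -> 0 <= K.
Proof. by move/(_ 0%N); rewrite expr0 mulr1; apply: le_trans; exact: opnorm_ge0. Qed.

Lemma specrad_le_pow_bound N (M : 'M[R]_N) K c : 0 <= c ->
  (forall k, opnorm (M ^+ k) <= K * c ^+ k) -> specrad M <= c.
Proof.
move=> c0 bound; apply: specrad_le => // l Ml; apply: (ler_of_expr_bound (K := K)) => // k.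
exact: le_trans (ceigenvalue_pow_le Ml k) (bound k).
Qed.

Lemma specrad_le_subset N N' (M : 'M[R]_N) (M' : 'M[R]_N') :
  (forall l, ceigenvalue M l -> ceigenvalue M' l) -> specrad M <= specrad M'.
Proof.
move=> sub; apply: specrad_le; first exact: specrad_ge0.
by move=> l /sub; exact: ceigenvalue_le_specrad.
Qed.

End SpectralRadius.

Section JointSpectralRadius.
Variable R : realType.

Lemma limn_ncvg (u : nat -> R) : ~ cvgn u -> limn u = 0.
Proof.
by move=> ncvg; rewrite /lim /lim_in xgetPN // => l ul; apply: ncvg; exact: cvgP ul.
Qed.

Lemma powR_exprK (x : R) k : 0 <= x -> (0 < k)%N -> powR (x ^+ k) k%:R^-1 = x.
Proof.
move=> x0 k0; rewrite -powR_mulrn // -powRrM mulfV ?powRr1 //.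
by rewrite pnatr_eq0 -lt0n.
Qed.

(* A divergent sequence has the junk limit 0; otherwise, for every d > 0,
   u k <= ((1 + d) c) ^+ k as soon as K < (1 + d) ^+ k. *)
Lemma limn_root_le (u : nat -> R) K c : 0 <= c -> (forall k, 0 <= u k) ->
  (forall k, u k <= K * c ^+ k) -> limn (fun k => powR (u k) k%:R^-1) <= c.
Proof.
move=> c0 u0 bound.
have [cvg_root|ncvg] := pselect (cvgn (fun k => powR (u k) k%:R^-1)); last first.
  by rewrite limn_ncvg.
apply/ler_addgt0Pr => e e0; apply: limr_le => //.
pose d := e / (c + 1).
have d0 : 0 < d by rewrite divr_gt0 // ltr_wpDl.
have [k0 Kk0] : exists k0, K < (1 + d) ^+ k0 by apply: exists_expr_gt; rewrite ltrDl.
apply: filterS (nbhs_infty_ge (maxn 1 k0)) => k /=; rewrite geq_max => /andP[k_gt0 k0k].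
have cd0 : 0 <= (1 + d) * c by rewrite mulr_ge0 // addr_ge0 // ltW.
have uk : u k <= ((1 + d) * c) ^+ k.
  apply: le_trans (bound k) _; rewrite exprMn ler_wpM2r ?exprn_ge0 //.
  by apply: le_trans (ltW Kk0) _; rewrite ler_weXn2l // lerDl ltW.
apply: le_trans (_ : powR (((1 + d) * c) ^+ k) k%:R^-1 <= _).
  by apply: ge0_ler_powR; rewrite ?nnegrE ?invr_ge0 ?ler0n ?exprn_ge0.
rewrite powR_exprK // mulrDl mul1r lerD2l /d mulrAC ler_pdivrMr ?ltr_wpDl //.
by rewrite ler_pM2l // lerDl.
Qed.

Lemma jsr_ge0 (I : finType) n (A : I -> 'M[R]_n) : 0 <= jsr A.
Proof.
rewrite /jsr; set u := fun k : nat => _.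
have [cvg_u|ncvg] := pselect (cvgn u); last by rewrite limn_ncvg.
by apply: limr_ge => //; apply: nearW => k; exact: powR_ge0.
Qed.

Lemma word_bound_ge0 (I : finType) n (A : I -> 'M[R]_n) K c :
  (forall k (w : {ffun 'I_k -> I}), opnorm (prodmx A w) <= K * c ^+ k) -> 0 <= K.
Proof.
move/(_ 0%N (ffun0 (card_ord 0))); rewrite expr0 mulr1.
by apply: le_trans; exact: opnorm_ge0.
Qed.

Lemma jsr_le_word_bound (I : finType) n (A : I -> 'M[R]_n) K c : 0 <= c ->
  (forall k (w : {ffun 'I_k -> I}), opnorm (prodmx A w) <= K * c ^+ k) -> jsr A <= c.
Proof.
move=> c0 bound; have K0 := word_bound_ge0 bound.
apply: (limn_root_le (K := K)) => // k; first exact: bigmax_ge_id.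
by apply: bigmax_le => [|w _]; rewrite ?mulr_ge0 ?exprn_ge0 ?bound.
Qed.

End JointSpectralRadius.

Lemma prod_telescope (Rg : pzRingType) (Y D : nat -> Rg) k :
  \prod_(0 <= j < k) (Y j + D j) = \prod_(0 <= j < k) Y j +
    \sum_(m < k) (\prod_(0 <= j < m) (Y j + D j)) * D m * \prod_(m.+1 <= j < k) Y j.
Proof.
elim: k => [|k IH]; first by rewrite !big_geq // big_ord0 addr0.
rewrite big_nat_recr //= IH big_nat_recr //= big_ord_recr /=.
rewrite [X in _ * _ * X]big_geq // mulr1 mulrDr mulrDl -addrA.
congr (_ + _); congr (_ + _); last by rewrite IH.
rewrite mulr_suml; apply: eq_bigr => m _.
by rewrite (@big_nat_recr _ _ _ k m.+1 _ (ltn_ord m)) /= !mulrA.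
Qed.

Section ProductPerturbation.
Variable R : realType.

(* Every partial product of the perturbed sequence is bounded by induction; the
   geometric sum of the telescoped error terms is closed by subrXX. *)
Lemma opnorm_prod_perturb N (Y D : nat -> 'M[R]_N) (kap xi e : R) : 0 <= e ->
  (forall a L, opnorm (\prod_(a <= j < a + L) Y j) <= kap * xi ^+ L) ->
  (forall j, opnorm (D j) <= e) ->
  forall k, opnorm (\prod_(0 <= j < k) (Y j + D j)) <= kap * (xi + kap * e) ^+ k.
Proof.
move=> e0 boundY boundD k; elim/ltn_ind: k => k IH.
set c := xi + kap * e.
have term_bound (m : 'I_k) : opnorm ((\prod_(0 <= j < m) (Y j + D j)) * D m *
    \prod_(m.+1 <= j < k) Y j) <= kap * c ^+ m * e * (kap * xi ^+ (k.-1 - m)).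
  apply: le_trans (opnorm_mulmx _ _) _.
  apply: ler_pM; rewrite ?opnorm_ge0 //.
    apply: le_trans (opnorm_mulmx _ _) _.
    by apply: ler_pM; rewrite ?opnorm_ge0 ?IH.
  have := boundY m.+1 (k.-1 - m)%N.
  by rewrite (_ : (m.+1 + (k.-1 - m) = k)%N) //; have := ltn_ord m; lia.
rewrite prod_telescope; apply: le_trans (opnormD _ _) _.
have head := boundY 0%N k; rewrite add0n in head.
apply: le_trans (lerD head (opnorm_sum _ _)) _.
apply: le_trans (lerD (lexx _) (ler_sum _ (fun m _ => term_bound m))) _.
have -> : \sum_(m < k) kap * c ^+ m * e * (kap * xi ^+ (k.-1 - m)) =
    kap * (c ^+ k - xi ^+ k).
  rewrite -opprB subrXX mulrN -mulNr !mulr_sumr; apply: eq_bigr => m _.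
  by rewrite /c; ring.
by rewrite -mulrDr addrC subrK.
Qed.

Lemma opnorm_pow_perturb N (M M' : 'M[R]_N) tau rho e : 0 <= e ->
  opnorm (M' - M) <= e -> (forall k, opnorm (M ^+ k) <= tau * rho ^+ k) ->
  forall k, opnorm (M' ^+ k) <= tau * (rho + tau * e) ^+ k.
Proof.
move=> e0 dM boundM k.
have := opnorm_prod_perturb (Y := fun _ => M) e0 _ (fun _ => dM) k.
rewrite prodr_const_nat subn0 addrC subrK; apply => a L.
by rewrite prodr_const_nat addKn.
Qed.

Lemma opnorm_word_perturb (I : finType) n (A A' : I -> 'M[R]_n) kap xi e : 0 <= e ->
  (forall i, opnorm (A' i - A i) <= e) ->
  (forall k (w : {ffun 'I_k -> I}), opnorm (prodmx A w) <= kap * xi ^+ k) ->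
  forall k (w : {ffun 'I_k -> I}), opnorm (prodmx A' w) <= kap * (xi + kap * e) ^+ k.
Proof.
move=> e0 dA boundA [|k] w; first by have := boundA 0%N w; rewrite /prodmx !big_ord0.
pose f j := w (inord j).
have := opnorm_prod_perturb (Y := fun j => A (f j)) e0 _ (fun j => dA (f j)) k.+1.
have -> : \prod_(0 <= j < k.+1) (A (f j) + (A' (f j) - A (f j))) = prodmx A' w.
  by rewrite big_mkord; apply: eq_bigr => j _; rewrite addrC subrK /f inord_val.
apply => a L; pose v := [ffun i : 'I_L => f (a + i)%N].
have -> : \prod_(a <= j < a + L) A (f j) = prodmx A v.
  rewrite /prodmx -{1}[a]add0n big_addn addKn big_mkord.
  by apply: eq_bigr => i _; rewrite ffunE addnC.
exact: boundA.
Qed.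

End ProductPerturbation.

Section Clustering.
Variables (R : realType) (s r : nat) (lab : 'I_s -> 'I_r).

Lemma sum_partition (V : nmodType) (F : 'I_s -> V) :
  \sum_j F j = \sum_(k < r) \sum_(j | lab j == k) F j.
Proof. by rewrite (partition_big lab predT). Qed.

(* [csize] counts a classical set, which is a boolean predicate only through [asbool]. *)
Lemma csizeE k : csize R lab k = #|[pred i | lab i == k]|%:R.
Proof.
by congr _%:R; apply: eq_card => i; rewrite /in_mem /mem /= /in_set /mkset asboolb.
Qed.

Lemma sum_cluster_const (V : lmodType R) k (x : V) :
  \sum_(i | lab i == k) x = csize R lab k *: x.
Proof. by rewrite csizeE scaler_nat -sumr_const. Qed.

Lemma csize_ge1 j : 1 <= csize R lab (lab j).
Proof. by rewrite csizeE ler1n; apply/card_gt0P; exists j; rewrite inE. Qed.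

Lemma csize_gt0 j : 0 < csize R lab (lab j).
Proof. exact: lt_le_trans ltr01 (csize_ge1 j). Qed.

Lemma csize_inv_ge0 k : 0 <= (csize R lab k)^-1.
Proof. by rewrite invr_ge0 csizeE ler0n. Qed.

Lemma csize_inv_mul_le j x : 0 <= x -> (csize R lab (lab j))^-1 * x <= x.
Proof. by move=> x0; rewrite ler_piMl ?invr_le1 ?unitfE ?lt0r_neq0 ?csize_gt0 ?csize_ge1. Qed.

Lemma exp_mats_dev m p (A : 'I_s -> 'M[R]_(m, p)) epsA :
  clust_close lab A epsA -> \sum_j opnorm (exp_mats lab A j - A j) <= epsA.
Proof.
move=> close; apply: le_trans close.
rewrite sum_partition; apply: ler_sum => k _; rewrite exchange_big /=.
apply: ler_sum => j /eqP <-.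
have -> : exp_mats lab A j - A j =
    (csize R lab (lab j))^-1 *: \sum_(i | lab i == lab j) (A i - A j).
  rewrite sumrB sum_cluster_const scalerBr scalerA mulVf ?scale1r //.
  exact: lt0r_neq0 (csize_gt0 j).
apply: le_trans (opnormZ _ _) _; rewrite ger0_norm ?csize_inv_ge0 //.
apply: le_trans (ler_wpM2l (csize_inv_ge0 _) (opnorm_sum _ _)) _.
apply: le_trans (csize_inv_mul_le _ (sumr_ge0 _ (fun i _ => opnorm_ge0 _))) _.
by apply: ler_sum => i _; exact: opnorm_le_frobn.
Qed.

Section ExpandedMarkov.
Variable T : 'M[R]_s.
Hypothesis T_markov : markov T.
Hypothesis lab_partition : is_partition lab.

Local Notation That := (red_markov lab T).

Definition block_sum i l : R := \sum_(j | lab j == l) T i j.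

(* Each block of row i of T is rescaled to carry the mass That(lab i, l), and
   replaced by the uniform distribution on the block when it carries no mass. *)
Definition exp_markov : 'M[R]_s := \matrix_(i, j)
  (if block_sum i (lab j) == 0 then That (lab i) (lab j) / csize R lab (lab j)
   else T i j * (That (lab i) (lab j) / block_sum i (lab j))).

Lemma markov_ge0 i j : 0 <= T i j.
Proof. by case: T_markov. Qed.

Lemma block_sum_ge0 i l : 0 <= block_sum i l.
Proof. by apply: sumr_ge0 => j _; exact: markov_ge0. Qed.

Lemma red_markovE k l : That k l = (csize R lab k)^-1 * \sum_(i | lab i == k) block_sum i l.
Proof. by rewrite mxE. Qed.

Lemma red_markov_ge0 k l : 0 <= That k l.
Proof.
by rewrite red_markovE mulr_ge0 ?csize_inv_ge0 // sumr_ge0 // => i _; exact: block_sum_ge0.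
Qed.

Lemma red_markov_row_sum i : \sum_l That (lab i) l = 1.
Proof.
under eq_bigr do rewrite red_markovE.
rewrite -mulr_sumr exchange_big /=.
under eq_bigr do rewrite /block_sum -sum_partition (proj2 T_markov).
by rewrite sum_cluster_const /GRing.scale /= mulr1 mulVf // lt0r_neq0 // csize_gt0.
Qed.

Lemma csize_cluster_gt0 l : 0 < csize R lab l.
Proof. by have [j <-] := lab_partition l; exact: csize_gt0. Qed.

Lemma exp_markov_block i l : \sum_(j | lab j == l) exp_markov i j = That (lab i) l.
Proof.
rewrite (eq_bigr (fun j => if block_sum i l == 0 then That (lab i) l / csize R lab l
   else T i j * (That (lab i) l / block_sum i l))); last by move=> j /eqP <-; rewrite mxE.
have c_pos := csize_cluster_gt0 l.
case: eqP => [_|/eqP S_neq0].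
  by rewrite sum_cluster_const /GRing.scale /= mulrCA mulfV ?mulr1 // lt0r_neq0.
by rewrite -mulr_suml -/(block_sum i l) mulrCA mulfV ?mulr1.
Qed.

Lemma exp_markov_markov : markov exp_markov.
Proof.
split=> [i j|i]; last first.
  rewrite sum_partition; under eq_bigr do rewrite exp_markov_block.
  exact: red_markov_row_sum.
rewrite mxE; case: ifP => _; first by rewrite divr_ge0 ?red_markov_ge0 ?ltW ?csize_cluster_gt0.
by rewrite mulr_ge0 ?markov_ge0 // divr_ge0 ?red_markov_ge0 ?block_sum_ge0.
Qed.

Lemma exp_markov_block_dev i l :
  \sum_(j | lab j == l) `|exp_markov i j - T i j| = `|That (lab i) l - block_sum i l|.
Proof.
rewrite (eq_bigr (fun j => `|(if block_sum i l == 0 then That (lab i) l / csize R lab l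
   else T i j * (That (lab i) l / block_sum i l)) - T i j|)); last first.
  by move=> j /eqP <-; rewrite mxE.
have c_pos := csize_cluster_gt0 l; have That0 := red_markov_ge0 (lab i) l.
case: eqP => [S0|/eqP S_neq0].
  have T0 j : lab j == l -> T i j = 0.
    by move=> jl; apply: (psumr_eq0P (fun j _ => markov_ge0 i j) S0).
  rewrite (eq_bigr (fun _ => That (lab i) l / csize R lab l)); last first.
    by move=> j jl; rewrite T0 // subr0 ger0_norm // divr_ge0 // ltW.
  rewrite sum_cluster_const /GRing.scale /= mulrCA mulfV ?mulr1 ?lt0r_neq0 //.
  by rewrite S0 subr0 ger0_norm.
have S_pos : 0 < block_sum i l by rewrite lt0r S_neq0 block_sum_ge0.
rewrite (eq_bigr (fun j => T i j * `|That (lab i) l / block_sum i l - 1|)); last first.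
  by move=> j _; rewrite -{2}[T i j]mulr1 -mulrBr normrM ger0_norm // markov_ge0.
rewrite -mulr_suml -/(block_sum i l) -{1}[block_sum i l]ger0_norm ?ltW // -normrM.
by rewrite mulrBr mulr1 mulrCA mulfV ?mulr1.
Qed.

Lemma red_markov_dev i l :
  `|That (lab i) l - block_sum i l| <=
  \sum_(i' | lab i' == lab i) `|block_sum i' l - block_sum i l|.
Proof.
have -> : That (lab i) l - block_sum i l =
   (csize R lab (lab i))^-1 * \sum_(i' | lab i' == lab i) (block_sum i' l - block_sum i l).
  rewrite red_markovE sumrB (@sum_cluster_const R^o) mulrBr.
  by congr (_ - _); rewrite /GRing.scale /= mulrA mulVf ?mul1r // lt0r_neq0 ?csize_gt0.
rewrite normrM ger0_norm ?csize_inv_ge0 //.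
apply: le_trans (ler_wpM2l (csize_inv_ge0 _) (ler_norm_sum _ _ _)) _.
by apply: csize_inv_mul_le; apply: sumr_ge0.
Qed.

Lemma exp_markov_frobn epsT : approx_lumpable lab T epsT -> frobn (exp_markov - T) <= epsT.
Proof.
move=> lump; apply: le_trans (frobn_le_l1 _) _; apply: le_trans lump.
have -> : \sum_i \sum_j `|(exp_markov - T) i j| =
    \sum_i \sum_l `|That (lab i) l - block_sum i l|.
  apply: eq_bigr => i _; rewrite sum_partition; apply: eq_bigr => l _.
  by rewrite -exp_markov_block_dev; apply: eq_bigr => j _; rewrite !mxE.
apply: le_trans (_ : \sum_i \sum_l \sum_(i' | lab i' == lab i)
    `|block_sum i' l - block_sum i l| <= _).
  by apply: ler_sum => i _; apply: ler_sum => l _; exact: red_markov_dev.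
rewrite sum_partition; apply: ler_sum => k _; rewrite exchange_big /=.
apply: ler_sum => l _; apply: ler_sum => i /eqP ->.
by apply: ler_sum => i' _; rewrite distrC.
Qed.

End ExpandedMarkov.

Lemma aggregatable_lumpable (T : 'M[R]_s) epsT :
  approx_aggregatable lab T epsT -> approx_lumpable lab T epsT.
Proof.
move=> agg; apply: le_trans agg; apply: ler_sum => k _.
rewrite exchange_big /=; apply: ler_sum => i _.
rewrite exchange_big /=; apply: ler_sum => i' _.
rewrite (sum_partition (fun j => `|T i j - T i' j|)); apply: ler_sum => l _.
by rewrite -sumrB; apply: ler_norm_sum.
Qed.

End Clustering.

Section AugmentedPerturbation.
Variable R : realType.

Lemma opnorm_tens_sqr_sub m n (X X' : 'M[R]_(m, n)) a e :
  opnorm X <= a -> opnorm (X' - X) <= e ->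
  opnorm (X' *t X' - X *t X) <= opnorm (X' - X) * (2 * a + e).
Proof.
move=> Xa dXe.
have -> : X' *t X' - X *t X = (X' - X) *t X' + X *t (X' - X).
  by apply/matrixP => i j; rewrite !mxE; ring.
have X'a : opnorm X' <= a + opnorm (X' - X).
  by rewrite -{1}[X'](subrK X) addrC; apply: le_trans (opnormD _ _) _; rewrite lerD.
apply: le_trans (opnormD _ _) _.
apply: le_trans (lerD (opnorm_tens _ _) (opnorm_tens _ _)) _.
have := opnorm_ge0 X; have := opnorm_ge0 (X' - X); nra.
Qed.

Lemma opnorm_scale_tens_sub m n (t t' : R) (X X' : 'M[R]_(m, n)) a e :
  0 <= t' -> opnorm X <= a -> opnorm (X' - X) <= e ->
  opnorm (t' *: (X' *t X') - t *: (X *t X)) <=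
  t' * (opnorm (X' - X) * (2 * a + e)) + `|t' - t| * a ^+ 2.
Proof.
move=> t'0 Xa dXe.
have -> : t' *: (X' *t X') - t *: (X *t X) =
    t' *: (X' *t X' - X *t X) + (t' - t) *: (X *t X).
  by rewrite scalerBr scalerBl addrA subrK.
apply: le_trans (opnormD _ _) _; apply: lerD.
  apply: le_trans (opnormZ _ _) _; rewrite ger0_norm // ler_wpM2l //.
  exact: opnorm_tens_sqr_sub.
apply: le_trans (opnormZ _ _) _; rewrite ler_wpM2l //.
apply: le_trans (opnorm_tens _ _) _; rewrite expr2.
by apply: ler_pM; rewrite ?opnorm_ge0.
Qed.

Lemma sum_sqr_stochastic_le s (P : 'M[R]_s) (c : 'I_s -> R) :
  markov P -> (forall j, 0 <= c j) ->
  \sum_i \sum_j (P j i * c j) ^+ 2 <= (\sum_j c j) ^+ 2.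
Proof.
move=> [P0 P1] c0; apply: le_trans (sum_sqr_le_sqr_sum c0); rewrite exchange_big /=.
apply: ler_sum => j _; under eq_bigr do rewrite exprMn.
rewrite -mulr_suml ler_piMl ?sqr_ge0 // -(P1 j).
by apply: ler_sum => i _; rewrite expr2 ler_piMl // -(P1 j) (bigD1 i) //= lerDl sumr_ge0.
Qed.

Lemma Abar_max_ge0 s n (A : 'I_s -> 'M[R]_n) : 0 <= Abar_max A.
Proof. exact: bigmax_ge_id. Qed.

Lemma eps_rho_ge0 s n (A : 'I_s -> 'M[R]_n) epsA epsT : 0 <= epsA -> 0 <= epsT ->
  0 <= eps_rho A epsA epsT.
Proof.
move=> eA eT; have a0 := Abar_max_ge0 A.
rewrite /eps_rho mulr_ge0 ?sqrtr_ge0 // addr_ge0 // mulr_ge0 ?sqr_ge0 //.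
by rewrite addr_ge0 // mulr_ge0.
Qed.

Lemma opnorm_aug_sub s n (T T' : 'M[R]_s) (A A' : 'I_s -> 'M[R]_n) epsA epsT :
  markov T' -> \sum_j opnorm (A' j - A j) <= epsA -> frobn (T' - T) <= epsT ->
  opnorm (aug T' A' - aug T A) <= eps_rho A epsA epsT.
Proof.
move=> T'markov dA dT; have [T'0 _] := T'markov.
set a := Abar_max A; set d := fun j => opnorm (A' j - A j).
have eA : 0 <= epsA by apply: le_trans dA; apply: sumr_ge0 => j _; exact: opnorm_ge0.
have eT : 0 <= epsT := le_trans (frobn_ge0 _) dT.
have a0 : 0 <= a := Abar_max_ge0 A.
have w0 : 0 <= 2 * a + epsA by rewrite addr_ge0 // mulr_ge0.
have d_le j : d j <= epsA.
  by apply: le_trans dA; rewrite (bigD1 j) //= lerDl sumr_ge0 // => i _; exact: opnorm_ge0.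
pose x i j := T' j i * (d j * (2 * a + epsA)).
pose y i j := `|(T' - T) j i| * a ^+ 2.
have x_le : Num.sqrt (\sum_i \sum_j x i j ^+ 2) <= (2 * a + epsA) * epsA.
  have c_ge0 j : 0 <= d j * (2 * a + epsA) by rewrite mulr_ge0 ?opnorm_ge0.
  apply: sqrtr_le; first by rewrite mulr_ge0.
  apply: le_trans (sum_sqr_stochastic_le (c := fun j => d j * _) T'markov c_ge0) _.
  rewrite lerXn2r ?nnegrE ?(sumr_ge0 _ (fun j _ => c_ge0 j)) ?mulr_ge0 //.
  by rewrite -mulr_suml mulrC ler_wpM2l.
have y_le : Num.sqrt (\sum_i \sum_j y i j ^+ 2) <= a ^+ 2 * epsT.
  rewrite exchange_big /= (eq_bigr (fun j => (a ^+ 2) ^+ 2 * \sum_i (T' - T) j i ^+ 2)).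
    rewrite -mulr_sumr sqrtrM ?sqr_ge0 // sqrtr_sqr ger0_norm ?sqr_ge0 //.
    by rewrite ler_wpM2l ?sqr_ge0.
  move=> j _; rewrite mulr_sumr; apply: eq_bigr => i _.
  by rewrite /y exprMn real_normK ?num_real // mulrC.
rewrite /aug -mxblockB; apply: le_trans (opnorm_mxblock _) _.
have [s0|s_gt0] := posnP s.
  by rewrite big1 ?sqrtr0 ?eps_rho_ge0 // => i; have := ltn_ord i; rewrite {2}s0.
apply: le_trans (_ : Num.sqrt (\sum_i \sum_j (x i j + y i j) ^+ 2) <= _).
  apply/ler_wsqrtr/ler_sum => i _; apply: ler_sum => j _.
  have xy_ge0 : 0 <= x i j + y i j by rewrite addr_ge0 // !mulr_ge0 ?opnorm_ge0.
  rewrite lerXn2r ?nnegrE ?opnorm_ge0 // /y !mxE.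
  by apply: opnorm_scale_tens_sub; [exact: T'0 | exact: le_bigmax | exact: d_le].
rewrite pair_bigA; apply: le_trans (minkowski_sum _ _) _.
rewrite -(pair_bigA _ (fun i j => x i j ^+ 2)) -(pair_bigA _ (fun i j => y i j ^+ 2)).
apply: le_trans (lerD x_le y_le) _.
rewrite /eps_rho -/a -[X in X <= _]mul1r; apply: ler_wpM2r.
  by rewrite addr_ge0 ?mulr_ge0 ?sqr_ge0.
by rewrite -{1}sqrtr1 ler_sqrt ?ler0n // ler1n.
Qed.

End AugmentedPerturbation.

Section EigenvalueLifting.
Variable R : realType.
Local Notation toC := (fun x : R => (x%:C)%C).

Lemma map_aug s n (T : 'M[R]_s) (A : 'I_s -> 'M[R]_n) :
  map_mx toC (aug T A) = \mxblock_(i < s, j < s) (toC (T j i) *: map_mx toC (A j *t A j)).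
Proof. by apply/matrixP => a b; rewrite !mxE rmorphM. Qed.

Lemma submxrowZ (F : fieldType) q (q_ : 'I_q -> nat) m (c : F)
    (v : 'M[F]_(m, \sum_i q_ i)) j :
  submxrow (c *: v) j = c *: submxrow v j.
Proof. by apply/matrixP => a b; rewrite !mxE. Qed.

(* A left eigenvector (v_k)_k of the reduced augmented matrix is copied onto
   every mode of its cluster; matching block sums make the copy a left
   eigenvector of the expanded one. *)
Lemma ceigenvalue_aug_expand s r n (lab : 'I_s -> 'I_r) (Tb : 'M[R]_s)
    (Th : 'M[R]_r) (Ah : 'I_r -> 'M[R]_n) :
  is_partition lab ->
  (forall i l, \sum_(j | lab j == l) Tb i j = Th (lab i) l) ->
  forall z, ceigenvalue (aug Th Ah) z -> ceigenvalue (aug Tb (fun i => Ah (lab i))) z.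
Proof.
move=> lab_partition block_sums z.
rewrite /ceigenvalue -!eigenvalue_root_char => /eigenvalueP [v vM vn0]; apply/eigenvalueP.
pose u := \mxrow_(i < s) submxrow v (lab i).
have key j : \sum_i submxrow v (lab i) *m
    (toC (Tb j i) *: map_mx toC (Ah (lab j) *t Ah (lab j))) = z *: submxrow v (lab j).
  have := congr1 (fun M => submxrow M (lab j)) vM.
  rewrite /= -{1}[v]submxrowK map_aug mul_mxrow_mxblock mxrowK submxrowZ => <-.
  rewrite (sum_partition lab); apply: eq_bigr => l _.
  rewrite (eq_bigr (fun i => toC (Tb j i) *: (submxrow v l *m
       map_mx toC (Ah (lab j) *t Ah (lab j))))) => [|i /eqP <-]; last by rewrite scalemxAr.
  by rewrite -scaler_suml -rmorph_sum /= block_sums scalemxAr.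
exists u.
  apply/mxrowP => j.
  by rewrite map_aug mul_mxrow_mxblock mxrowK submxrowZ mxrowK key.
apply: contra vn0 => /eqP u0; apply/eqP; rewrite -[v]submxrowK.
rewrite (_ : (fun k => submxrow v k) = fun k => 0); first exact: mxrow0.
apply: funext => k; have [i <-] := lab_partition k.
rewrite -[submxrow v (lab i)](@mxrowK _ _ _ _ (fun i => submxrow v (lab i))).
by rewrite -/u u0 submxrow0.
Qed.

End EigenvalueLifting.

Section ReductionBounds.
Variables (R : realType) (n s r : nat) (A : 'I_s -> 'M[R]_n) (lab : 'I_s -> 'I_r).
Variable epsA : R.
Hypothesis lab_partition : is_partition lab.
Hypothesis A_close : clust_close lab A epsA.

Local Notation Ahat := (red_mats lab A).
Local Notation Abar := (exp_mats lab A).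

Lemma exp_mats_dev_le i : opnorm (Abar i - A i) <= epsA.
Proof.
apply: le_trans (exp_mats_dev A_close); rewrite (bigD1 i) //= lerDl.
by apply: sumr_ge0 => j _; exact: opnorm_ge0.
Qed.

Lemma epsA_ge0 : 0 <= epsA.
Proof.
by apply: le_trans (exp_mats_dev A_close); apply: sumr_ge0 => i _; exact: opnorm_ge0.
Qed.

Lemma prodmx_red_mats k (w : {ffun 'I_k -> 'I_r}) :
  exists w' : {ffun 'I_k -> 'I_s}, prodmx Ahat w = prodmx Abar w'.
Proof.
have rep l : exists i, lab i == l by have [i <-] := lab_partition l; exists i.
exists [ffun j => xchoose (rep (w j))]; apply: eq_bigr => j _.
by rewrite ffunE /exp_mats (eqP (xchooseP (rep (w j)))).
Qed.

Lemma jsr_red_le xi kap : 0 <= xi ->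
  (forall k (w : {ffun 'I_k -> 'I_s}), opnorm (prodmx A w) <= kap * xi ^+ k) ->
  jsr Ahat <= xi + kap * epsA.
Proof.
move=> xi0 boundA; have kap0 := word_bound_ge0 boundA.
have boundAbar := opnorm_word_perturb epsA_ge0 exp_mats_dev_le boundA.
apply: (jsr_le_word_bound (K := kap)); first by rewrite addr_ge0 ?mulr_ge0 ?epsA_ge0.
by move=> k w; have [w' ->] := prodmx_red_mats w; exact: boundAbar.
Qed.

Lemma jsr_full_le xi kap : 0 <= xi ->
  (forall k (w : {ffun 'I_k -> 'I_s}), opnorm (prodmx Abar w) <= kap * xi ^+ k) ->
  jsr A <= xi + kap * epsA.
Proof.
move=> xi0 boundAbar; have kap0 := word_bound_ge0 boundAbar.
have dev i : opnorm (A i - Abar i) <= epsA by rewrite -opprB opnormN exp_mats_dev_le.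
apply: (jsr_le_word_bound (K := kap)); first by rewrite addr_ge0 ?mulr_ge0 ?epsA_ge0.
exact: opnorm_word_perturb epsA_ge0 dev boundAbar.
Qed.

Section MeanSquare.
Variables (T : 'M[R]_s) (epsT : R).
Hypothesis T_markov : markov T.

Local Notation erho := (eps_rho A epsA epsT).

Lemma specrad_red_le rho tau : approx_lumpable lab T epsT -> 0 <= rho ->
  (forall k, opnorm (aug T A ^+ k) <= tau * rho ^+ k) ->
  specrad (aug (red_markov lab T) Ahat) <= rho + tau * erho.
Proof.
move=> lump rho0 boundA; have tau0 := pow_bound_ge0 boundA.
have Tbar_markov := exp_markov_markov T_markov lab_partition.
have dT := exp_markov_frobn T_markov lab_partition lump.
have eT : 0 <= epsT := le_trans (frobn_ge0 _) dT.
have dAug := opnorm_aug_sub Tbar_markov (exp_mats_dev A_close) dT.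
apply: le_trans (specrad_le_subset (M' := aug (exp_markov lab T) Abar) _) _.
  exact: ceigenvalue_aug_expand lab_partition (exp_markov_block T lab_partition).
apply: (specrad_le_pow_bound (K := tau)).
  by rewrite addr_ge0 // mulr_ge0 // eps_rho_ge0 // epsA_ge0.
exact: opnorm_pow_perturb (eps_rho_ge0 _ epsA_ge0 eT) dAug boundA.
Qed.

Lemma specrad_full_le Tbar rho tau : markov Tbar -> frobn (Tbar - T) <= epsT -> 0 <= rho ->
  (forall k, opnorm (aug Tbar Abar ^+ k) <= tau * rho ^+ k) ->
  specrad (aug T A) <= rho + tau * erho.
Proof.
move=> Tbar_markov dT rho0 boundAbar; have tau0 := pow_bound_ge0 boundAbar.
have eT : 0 <= epsT := le_trans (frobn_ge0 _) dT.
have dAug : opnorm (aug T A - aug Tbar Abar) <= erho.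
  by rewrite -opprB opnormN opnorm_aug_sub ?exp_mats_dev.
apply: (specrad_le_pow_bound (K := tau)).
  by rewrite addr_ge0 // mulr_ge0 // eps_rho_ge0 // epsA_ge0.
exact: opnorm_pow_perturb (eps_rho_ge0 _ epsA_ge0 eT) dAug boundAbar.
Qed.

End MeanSquare.

End ReductionBounds.

Theorem theorem5 (R : realType) (n p s r : nat)
  (A : 'I_s -> 'M[R]_n) (B : 'I_s -> 'M[R]_(n, p)) (T : 'M[R]_s)
  (lab : 'I_s -> 'I_r) (epsA epsB epsT : R) :
  ergodic T ->
  is_partition lab ->
  clust_close lab A epsA ->
  clust_close lab B epsB ->
  (approx_lumpable lab T epsT \/ approx_aggregatable lab T epsT) ->
  let Ahat := red_mats lab A in
  let That := red_markov lab T in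
  let Abar := exp_mats lab A in
  let calA := aug T A in
  let calAhat := aug That Ahat in
  let erho := eps_rho A epsA epsT in
  (* (T1) MSS *)
  (forall rho tau : R,
     specrad calA <= rho ->
     (forall k : nat, opnorm (calA ^+ k) <= tau * rho ^+ k) ->
     specrad calAhat - specrad calA <= tau * erho + (rho - specrad calA))
  /\
  (forall Tbar : 'M[R]_s,
     markov Tbar ->
     infnorm (Tbar - T) <= epsT ->
     frobn (Tbar - T) <= epsT ->
     (forall (i : 'I_s) (l : 'I_r),
        \sum_(j < s | lab j == l) Tbar i j = That (lab i) l) ->
     forall rhohat taubar : R,
     specrad calAhat <= rhohat ->
     (forall k : nat, opnorm (aug Tbar Abar ^+ k) <= taubar * rhohat ^+ k) ->
     specrad calA - specrad calAhat <= taubar * erho + (rhohat - specrad calAhat))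
  /\
  (* (T2) uniform stability *)
  (forall xi kappa : R,
     jsr A <= xi ->
     (forall (k : nat) (w : {ffun 'I_k -> 'I_s}),
        opnorm (prodmx A w) <= kappa * xi ^+ k) ->
     jsr Ahat - jsr A <= kappa * epsA + (xi - jsr A))
  /\
  (forall xihat kappabar : R,
     jsr Ahat <= xihat ->
     (forall (k : nat) (w : {ffun 'I_k -> 'I_s}),
        opnorm (prodmx Abar w) <= kappabar * xihat ^+ k) ->
     jsr A - jsr Ahat <= kappabar * epsA + (xihat - jsr Ahat)).
Proof.
move=> [T_markov _] lab_partition A_close _ T_close Ahat That Abar calA calAhat erho.
rewrite {}/erho {}/calAhat {}/calA {}/Abar {}/That {}/Ahat.
(* Ergodicity is used only through the Markov property; the clustering of the
   B_i and the infinity-norm bound on Tbar - T do not enter these bounds. *)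
have lump : approx_lumpable lab T epsT by case: T_close => // /aggregatable_lumpable.
split; [|split; [|split]].
- move=> rho tau rho_ge boundA.
  have := specrad_red_le lab_partition A_close T_markov lump
    (le_trans (specrad_ge0 _) rho_ge) boundA; lra.
- move=> Tbar Tbar_markov _ dT _ rho tau rho_ge boundAbar.
  have := specrad_full_le A_close Tbar_markov dT
    (le_trans (specrad_ge0 _) rho_ge) boundAbar; lra.
- move=> xi kap xi_ge boundA.
  have := jsr_red_le lab_partition A_close (le_trans (jsr_ge0 _) xi_ge) boundA; lra.
- move=> xi kap xi_ge boundAbar.
  have := jsr_full_le A_close (le_trans (jsr_ge0 _) xi_ge) boundAbar; lra.
Qed.
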